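(* The smallest eigenvalue of $P_{DC}^N=\tilde{\Pi}^N P_{DC} \tilde{\Pi}^N$ is \begin{equation*} \lambda^N_{\mathrm{min}}=\begin{cases} \frac{1}{2} -\frac{1}{2} \sqrt{(2p_{z}-1)^2+8\cdot 2^{-N}(p_{z}-p_{z}^2)} & N \text{ odd},\\ \frac{1}{2} -\frac{1}{2} \sqrt{(2p_{z}-1)^2+16\cdot 2^{-N}(p_{z}-p_{z}^2)} & N \text{ even}. \end{cases} \end{equation*}
   Context: Bob uses active basis choice with perfect-efficiency threshold detectors on a two-polarization-mode Fock space $\mathcal{H}_B$. His double-click POVM element in the $H/V$ basis is $P_{H/V} = \sum_{n_V=1}^\infty \sum_{n_H=1}^\infty |n_H,n_V\rangle\langle n_H,n_V|$, and $P_{D/A}$ is defined analogously in the diagonal/anti-diagonal basis. With $H/V$ chosen with probability $p_z$, the total double-click POVM is $P_{DC} = p_{z} P_{H/V}+ (1-p_{z}) P_{D/A}$. For $N=0,1,2,\dots$, the projector onto the total $N$-photon subspace is $\tilde{\Pi}^N = \sum_{n=0}^N |n,N-n\rangle\langle n,N-n|_{H/V}=\sum_{n=0}^N |n,N-n\rangle\langle n,N-n|_{D/A}$; $P_{DC}$ is block-diagonal with respect to these projectors. *)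

From HB Require Import structures.
From mathcomp Require Import all_boot all_order all_algebra.
Set Implicit Arguments. Unset Strict Implicit. Unset Printing Implicit Defensive.
Import Order.TTheory GRing.Theory Num.Theory.
Local Open Scope ring_scope.

(* The total N-photon subspace  Pi~^N H_B  of the two-polarization-mode Fock
   space is represented in coordinates w.r.t. its H/V Fock basis
   |k, N-k>_{H/V}, k = 0..N  (column vectors in 'cV[R]_(N.+1)).
   All amplitudes involved are real, so a real field R suffices. *)

Definition hv_ket (R : rcfType) (N : nat) (n : 'I_N.+1) : 'cV[R]_(N.+1) :=
  \col_(k < N.+1) (if k == n then 1 else 0).

(* Coordinate  <k, N-k|_{H/V} |n, N-n>_{D/A}  with the mode convention
   a_D = (a_H + a_V)/sqrt 2,  a_A = (a_H - a_V)/sqrt 2, i.e.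
   |n,N-n>_{D/A} = (a_D^dag)^n (a_A^dag)^(N-n) |0> / sqrt(n! (N-n)!). *)
Definition da_coef (R : rcfType) (N n k : nat) : R :=
  Num.sqrt ((k`! * (N - k)`!)%:R / (n`! * (N - n)`!)%:R) / Num.sqrt (2 ^+ N)
  * \sum_(i < k.+1)
      ('C(n, i) * 'C(N - n, k - i))%:R * (-1) ^+ (N - n - (k - i)).

Definition da_ket (R : rcfType) (N : nat) (n : 'I_N.+1) : 'cV[R]_(N.+1) :=
  \col_(k < N.+1) da_coef R N n k.

Definition ket_proj (R : rcfType) (m : nat) (v : 'cV[R]_m) : 'M[R]_m :=
  v *m v^T.

Definition PHV_N (R : rcfType) (N : nat) : 'M[R]_(N.+1) :=
  \sum_(n < N.+1 | (1 <= n)%N && (1 <= N - n)%N) ket_proj (hv_ket R n).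

Definition PDA_N (R : rcfType) (N : nat) : 'M[R]_(N.+1) :=
  \sum_(n < N.+1 | (1 <= n)%N && (1 <= N - n)%N) ket_proj (da_ket R n).

Definition PDC_N (R : rcfType) (pz : R) (N : nat) : 'M[R]_(N.+1) :=
  pz *: PHV_N R N + (1 - pz) *: PDA_N R N.

Definition lambda_min (R : rcfType) (pz : R) (N : nat) : R :=
  2^-1 - 2^-1 * Num.sqrt ((2 * pz - 1) ^+ 2
      + (if odd N then 8 else 16) * (2 ^+ N)^-1 * (pz - pz ^+ 2)).

From HB Require Import structures.
From mathcomp Require Import all_boot all_order all_algebra.
From mathcomp Require Import ring lra zify.
Import Order.TTheory GRing.Theory Num.Theory.
Set Implicit Arguments.
Unset Strict Implicit.
Unset Printing Implicit Defensive.
Local Open Scope ring_scope.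

(* On the N-photon block, P_{H/V} and P_{D/A} are the identity minus the projectors onto
   the two states |N,0>, |0,N> of their basis that do not double-click, so
   P_DC^N = 1 - Q with Q = p_z (|e_0><e_0| + |e_N><e_N|) + (1 - p_z) (|u_0><u_0| + |u_N><u_N|),
   and lambda_min = 1 - mu for the largest eigenvalue mu of Q.  The D/A kets are orthonormal
   (orthogonality of Krawtchouk polynomials, read off from the generating function
   (X + Y)^m (X - Y)^(N-m)), and <e_i|u_j> = 2^(-N/2), except <e_0|u_0> = (-1)^N 2^(-N/2).
   On the span of these four vectors mu is the largest root of
   mu^2 - mu + (1 - k 2^-N) p_z (1 - p_z) = 0, with k = 2 for N odd and k = 4 for N even:
   an explicit eigenvector attains it, and a sum-of-squares certificate gives
   |Q v|^2 <= mu <Q v, v>, hence <Q v, v> <= mu |v|^2 for every v. *)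

Lemma fact_binomial_sym N m k i : (m <= N)%N -> (k <= N)%N -> (i <= k)%N -> (i <= m)%N ->
  (k - i <= N - m)%N ->
  (k`! * (N - k)`! * ('C(m, i) * 'C(N - m, k - i)) =
   m`! * (N - m)`! * ('C(k, i) * 'C(N - k, m - i)))%N.
Proof.
move=> le_mN le_kN le_ik le_im le_kiNm.
have le_miNk : (m - i <= N - k)%N by lia.
have rest : (N - k - (m - i) = N - m - (k - i))%N by lia.
have := bin_fact le_im; have := bin_fact le_kiNm; have := bin_fact le_ik.
have := bin_fact le_miNk; rewrite rest.
set d := (N - m - (k - i))%N => fNk fk fNm fm.
apply/eqP; rewrite -(@eqn_pmul2r (i`! * (m - i)`! * ((k - i)`! * d`!))); last first.
  by rewrite !muln_gt0 !fact_gt0.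
apply/eqP; transitivity
  (k`! * (N - k)`! * ('C(m, i) * (i`! * (m - i)`!)) * ('C(N - m, k - i) * ((k - i)`! * d`!)))%N.
  by ring.
by rewrite fNm fm -fk -fNk; ring.
Qed.

Section Krawtchouk.
Variable A : comNzRingType.

Definition kraw_term (N m k i : nat) : A :=
  ('C(m, i) * 'C(N - m, k - i))%:R * (-1) ^+ (N - m - (k - i)).

Definition kraw (N m k : nat) : A := \sum_(i < k.+1) kraw_term N m k i.

Lemma coef_XaddC_exp (c : A) n i :
  (('X + c%:P) ^+ n)`_i = c ^+ (n - i) *+ 'C(n, i).
Proof.
elim: n i => [|n IH] [|i]; first by rewrite expr0 coef1 mulr1n.
- by rewrite expr0 coef1.
- by rewrite exprS mulrDl coefD coefXM coefCM add0r IH !subn0 !bin0 !mulr1n exprS.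
rewrite exprS mulrDl coefD coefXM coefCM /= !IH binS mulrnDr subSS addrC.
congr (_ + _); have [lt_in|lt_ni] := leqP i.+1 n.
  by rewrite mulrnAr -exprS; have -> : (n - i.+1).+1 = (n - i)%N by lia.
by rewrite bin_small // !mulr0n mulr0.
Qed.

Lemma coef_kraw_gen (b : A) N m k : (m <= N)%N ->
  (('X + b%:P) ^+ m * ('X + (- b)%:P) ^+ (N - m))`_k = kraw N m k * b ^+ (N - k).
Proof.
move=> le_mN; rewrite coefM /kraw /kraw_term big_distrl /=; apply: eq_bigr => -[i lt_ik] _ /=.
rewrite !coef_XaddC_exp.
have [le_im|lt_mi] := leqP i m; last by rewrite (bin_small lt_mi) mul0n mulr0n !mul0r.
have [le_ki|lt_ki] := leqP (k - i) (N - m); last first.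
  by rewrite (bin_small lt_ki) muln0 mulr0 !mul0r.
rewrite (exprNn b) -(mulr_natl (b ^+ _) 'C(m, i)) -(mulr_natl (_ * _) 'C(N - m, k - i)) natrM.
have -> : b ^+ (N - k) = b ^+ (m - i) * b ^+ (N - m - (k - i)).
  by rewrite -exprD; congr (_ ^+ _); lia.
ring.
Qed.

Lemma size_kraw_gen (b : A) N m : (m <= N)%N ->
  (size (('X + b%:P) ^+ m * ('X + (- b)%:P) ^+ (N - m))%R <= N.+1)%N.
Proof.
move=> le_mN; apply: leq_trans (size_polyMleq _ _) _.
have := size_poly_exp_leq ('X + b%:P) m; have := size_poly_exp_leq ('X + (- b)%:P) (N - m).
rewrite !size_XaddC /= !mul1n => le_q le_p.
rewrite -subn1 leq_subLR add1n (leq_trans (leq_add le_p le_q)) //; lia.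
Qed.

Lemma kraw_widen N m k : (k <= N)%N ->
  kraw N m k = \sum_(i < N.+1 | (i <= k)%N && (i <= m)%N) kraw_term N m k i.
Proof.
move=> le_kN; rewrite /kraw (big_ord_widen N.+1 (kraw_term N m k)) // big_mkcondr.
apply: eq_bigr => i _; case: leqP => // lt_mi.
by rewrite /kraw_term bin_small // mul0n mul0r.
Qed.

Lemma kraw_term_sym N m k i : (m <= N)%N -> (k <= N)%N ->
  (i <= k)%N -> (i <= m)%N ->
  (k`! * (N - k)`!)%:R * kraw_term N m k i = (m`! * (N - m)`!)%:R * kraw_term N k m i.
Proof.
move=> le_mN le_kN le_ik le_im; rewrite /kraw_term !mulrA -!natrM.
have [le_kiNm|lt_Nmki] := leqP (k - i) (N - m); last first.
  have lt_Nkmi : (N - k < m - i)%N by lia.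
  by rewrite !(bin_small lt_Nmki, bin_small lt_Nkmi) !muln0 !mul0r.
rewrite fact_binomial_sym //; congr (_ * (-1) ^+ _); lia.
Qed.

Lemma kraw_sym N m k : (m <= N)%N -> (k <= N)%N ->
  (k`! * (N - k)`!)%:R * kraw N m k = (m`! * (N - m)`!)%:R * kraw N k m.
Proof.
move=> le_mN le_kN; rewrite (kraw_widen m le_kN) (kraw_widen k le_mN) !mulr_sumr.
apply: eq_big => [i|i /andP[le_ik le_im]]; first exact: andbC.
exact: kraw_term_sym.
Qed.
End Krawtchouk.

Lemma kraw_polyC (A : comNzRingType) N m k :
  kraw {poly A} N m k = (kraw A N m k)%:P.
Proof.
rewrite /kraw rmorph_sum; apply: eq_bigr => i _; rewrite /kraw_term.
by rewrite [in RHS]rmorphM [in RHS]rmorphXn rmorphN1 rmorph_nat.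
Qed.

(* Evaluate [(Y + X - 1)^m (Y - X + 1)^(N-m)] at [Y = X + 1] in two ways: it is
   [2^N X^m], and expanding in [Y] gives [sum_k kraw N m k (X + 1)^k (X - 1)^(N-k)]. *)
Lemma kraw_orthogonal (A : comNzRingType) N m j : (m <= N)%N ->
  \sum_(k < N.+1) kraw A N m k * kraw A N k j = 2 ^+ N * (j == m)%:R.
Proof.
move=> le_mN.
pose a : {poly A} := 'X + 1%:P; pose b : {poly A} := 'X + (-1)%:P.
pose Q : {poly {poly A}} := ('X + b%:P) ^+ m * ('X + (- b)%:P) ^+ (N - m).
have Qa_closed : Q.[a] = (2 ^+ N)%:P * 'X ^+ m.
  rewrite /Q hornerM !horner_exp !hornerD !hornerX !hornerC.
  have -> : a + b = 2%:P * 'X by rewrite /a /b polyCN; ring.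
  have -> : a + - b = 2%:P by rewrite /a /b polyCN polyC1; ring.
  by rewrite exprMn -!rmorphXn mulrAC -rmorphM -natrM -expnD subnKC.
have Qa_expanded :
    Q.[a] = \sum_(k < N.+1) (kraw A N m k)%:P * (a ^+ k * b ^+ (N - k)).
  rewrite (horner_coef_wide _ (size_kraw_gen b le_mN)); apply: eq_bigr => k _.
  by rewrite coef_kraw_gen // kraw_polyC -mulrA [b ^+ _ * _]mulrC.
have := congr1 (fun p : {poly A} => p`_j) (etrans (esym Qa_expanded) Qa_closed).
rewrite /= coef_sum coefCM coefXn => <-; apply: eq_bigr => -[k lt_kN] _ /=.
by rewrite coefCM coef_kraw_gen // expr1n mulr1.
Qed.

Section DiagonalBasis.
Variables (R : rcfType) (N : nat).

Definition fact_wt (k : nat) : R := (k`! * (N - k)`!)%:R.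
Definition sqrt_wt (k : nat) : R := Num.sqrt (fact_wt k).
Definition overlap : R := (Num.sqrt (2 ^+ N))^-1.

Lemma fact_wt_gt0 k : 0 < fact_wt k.
Proof. by rewrite ltr0n muln_gt0 !fact_gt0. Qed.

Lemma sqrt_wt_gt0 k : 0 < sqrt_wt k.
Proof. by rewrite sqrtr_gt0 fact_wt_gt0. Qed.

Lemma sqrt_wt_neq0 k : sqrt_wt k != 0.
Proof. by rewrite gt_eqF // sqrt_wt_gt0. Qed.

Lemma sqr_sqrt_wt k : sqrt_wt k ^+ 2 = fact_wt k.
Proof. by rewrite sqr_sqrtr // ltW // fact_wt_gt0. Qed.

Lemma overlap_gt0 : 0 < overlap.
Proof. by rewrite invr_gt0 sqrtr_gt0 exprn_gt0. Qed.

Lemma sqr_overlap : overlap ^+ 2 = (2 ^+ N)^-1.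
Proof. by rewrite exprVn sqr_sqrtr // exprn_ge0. Qed.

Lemma da_coefE n k : da_coef R N n k = sqrt_wt k / sqrt_wt n * overlap * kraw R N n k.
Proof. by rewrite /da_coef sqrtrM ?sqrtrV // ltW // fact_wt_gt0. Qed.

Lemma da_coef_sym n k : (n <= N)%N -> (k <= N)%N -> da_coef R N n k = da_coef R N k n.
Proof.
move=> le_nN le_kN.
have expand n' k' : da_coef R N n' k' =
    overlap / (sqrt_wt k' * sqrt_wt n') * (fact_wt k' * kraw R N n' k').
  by rewrite da_coefE -sqr_sqrt_wt; field; rewrite !sqrt_wt_neq0.
by rewrite !expand kraw_sym // [sqrt_wt n * _]mulrC.
Qed.

Lemma da_coef_involutive a b : (a <= N)%N -> (b <= N)%N ->
  \sum_(j < N.+1) da_coef R N j a * da_coef R N b j = (a == b)%:R.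
Proof.
move=> le_aN le_bN; transitivity
    (sqrt_wt a / sqrt_wt b * overlap ^+ 2 * \sum_(j < N.+1) kraw R N b j * kraw R N j a).
  rewrite mulr_sumr; apply: eq_bigr => j _; rewrite !da_coefE.
  by field; rewrite !sqrt_wt_neq0.
rewrite kraw_orthogonal // sqr_overlap; have [->|_] := eqVneq a b; last by rewrite !mulr0.
by rewrite divff ?sqrt_wt_neq0 // mul1r mulr1 mulVf // expf_neq0 // pnatr_eq0.
Qed.

Lemma da_coef_orthonormal_cols a b : (a <= N)%N -> (b <= N)%N ->
  \sum_(k < N.+1) da_coef R N a k * da_coef R N b k = (a == b)%:R.
Proof.
move=> le_aN le_bN; rewrite -da_coef_involutive //; apply: eq_bigr => -[k lt_kN] _ /=.
by rewrite (@da_coef_sym a k).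
Qed.

Lemma da_coef_orthonormal_rows i j : (i <= N)%N -> (j <= N)%N ->
  \sum_(n < N.+1) da_coef R N n i * da_coef R N n j = (i == j)%:R.
Proof.
move=> le_iN le_jN; rewrite -da_coef_involutive //; apply: eq_bigr => -[n lt_nN] _ /=.
by rewrite (@da_coef_sym n j).
Qed.

Lemma da_coef00 : da_coef R N 0 0 = (-1) ^+ N * overlap.
Proof.
rewrite da_coefE divff ?sqrt_wt_neq0 // mul1r /kraw /kraw_term big_ord1 /= bin0 !subn0 bin0.
by rewrite mul1n mul1r mulrC.
Qed.

Lemma sqrt_wt0 : sqrt_wt 0 = sqrt_wt N.
Proof. by rewrite /sqrt_wt /fact_wt subnn subn0 mulnC. Qed.

Lemma da_coef0N : da_coef R N 0 N = overlap.
Proof.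
rewrite da_coefE -sqrt_wt0 divff ?sqrt_wt_neq0 // mul1r /kraw /kraw_term.
rewrite big_ord_recl big1 => [|i _].
  by rewrite bin0 subn0 subnn binn mul1n mul1r addr0 mulr1.
by rewrite bin0n mul0n mul0r.
Qed.

Lemma da_coefN0 : da_coef R N N 0 = overlap.
Proof.
rewrite da_coefE sqrt_wt0 divff ?sqrt_wt_neq0 // mul1r /kraw /kraw_term big_ord1 /= !bin0 subnn.
by rewrite mul1r mulr1.
Qed.

Lemma da_coefNN : da_coef R N N N = overlap.
Proof.
rewrite da_coefE divff ?sqrt_wt_neq0 // mul1r /kraw /kraw_term big_ord_recr /= big1 => [|i _].
  by rewrite binn subnn bin0 subnn mul1r add0r mulr1.
have lt0Ni : (0 < N - i)%N by case: i => /= i; lia.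
by rewrite subnn (bin_small lt0Ni) muln0 mul0r.
Qed.
End DiagonalBasis.

Lemma psd_binary_form (R : rcfType) (al ga be x y : R) :
  0 <= al -> 0 <= ga -> be ^+ 2 <= al * ga ->
  0 <= al * x ^+ 2 + ga * y ^+ 2 - 2 * be * x * y.
Proof.
move=> al_ge0 ga_ge0 disc_le.
have [al0|al_neq0] := eqVneq al 0.
  rewrite al0 mul0r in disc_le *.
  have -> : be = 0 by apply/eqP; rewrite -sqrf_eq0 eq_le disc_le sqr_ge0.
  by rewrite mul0r !mulr0 !mul0r subr0 add0r mulr_ge0 ?sqr_ge0.
have al_gt0 : 0 < al by rewrite lt_def al_neq0.
rewrite -(pmulr_rge0 _ al_gt0).
have -> : al * (al * x ^+ 2 + ga * y ^+ 2 - 2 * be * x * y) =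
    (al * x - be * y) ^+ 2 + (al * ga - be ^+ 2) * y ^+ 2 by ring.
by rewrite addr_ge0 ?sqr_ge0 // mulr_ge0 ?sqr_ge0 // subr_ge0.
Qed.

(* Sum-of-squares certificates; [be ^+ 2 <= al * ga] is where the equation for [mu] enters. *)
Section MixtureCoordBound.
Variables (R : rcfType) (p c mu x0 xN y0 yN : R).

Local Notation X := (p * (x0 ^+ 2 + xN ^+ 2) + (1 - p) * (y0 ^+ 2 + yN ^+ 2)).
Local Notation X2 := (p ^+ 2 * (x0 ^+ 2 + xN ^+ 2) + (1 - p) ^+ 2 * (y0 ^+ 2 + yN ^+ 2)).

Lemma mixture_coord_bound_odd : 0 <= p <= 1 -> p <= mu -> 1 - p <= mu ->
  mu ^+ 2 - mu + (1 - 2 * c ^+ 2) * (p * (1 - p)) = 0 ->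
  X2 + 2 * p * (1 - p) * c * (- x0 * y0 + x0 * yN + xN * y0 + xN * yN) <= mu * X.
Proof.
move=> /andP[p_ge0 p_le1] p_le_mu q_le_mu mu_root; rewrite -subr_ge0.
set al := p * (mu - p); set ga := (1 - p) * (mu - 1 + p) / 2; set be := p * (1 - p) * c.
have al_ge0 : 0 <= al by apply: mulr_ge0; lra.
have ga_ge0 : 0 <= ga by do 2?apply: mulr_ge0; lra.
have disc_le : be ^+ 2 <= al * ga.
  have -> : al * ga = p * (1 - p) * (mu ^+ 2 - mu + p * (1 - p)) / 2 by rewrite /al /ga; ring.
  have -> : mu ^+ 2 - mu + p * (1 - p) = 2 * c ^+ 2 * (p * (1 - p)) by lra.
  rewrite /be; lra.
have -> : mu * X - (X2 + 2 * p * (1 - p) * c * (- x0 * y0 + x0 * yN + xN * y0 + xN * yN)) =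
   (al * x0 ^+ 2 + ga * (yN - y0) ^+ 2 - 2 * be * x0 * (yN - y0)) +
   (al * xN ^+ 2 + ga * (yN + y0) ^+ 2 - 2 * be * xN * (yN + y0)).
  by rewrite /al /ga /be; field.
by rewrite addr_ge0 // psd_binary_form.
Qed.

Lemma mixture_coord_bound_even : 0 <= p <= 1 -> p <= mu -> 1 - p <= mu ->
  mu ^+ 2 - mu + (1 - 4 * c ^+ 2) * (p * (1 - p)) = 0 ->
  X2 + 2 * p * (1 - p) * c * (x0 * y0 + x0 * yN + xN * y0 + xN * yN) <= mu * X.
Proof.
move=> /andP[p_ge0 p_le1] p_le_mu q_le_mu mu_root; rewrite -subr_ge0.
set al := p * (mu - p) / 2; set ga := (1 - p) * (mu - 1 + p) / 2; set be := p * (1 - p) * c.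
have al_ge0 : 0 <= al by do 2?apply: mulr_ge0; lra.
have ga_ge0 : 0 <= ga by do 2?apply: mulr_ge0; lra.
have disc_le : be ^+ 2 <= al * ga.
  have -> : al * ga = p * (1 - p) * (mu ^+ 2 - mu + p * (1 - p)) / 4 by rewrite /al /ga; field.
  have -> : mu ^+ 2 - mu + p * (1 - p) = 4 * c ^+ 2 * (p * (1 - p)) by lra.
  rewrite /be; lra.
have -> : mu * X - (X2 + 2 * p * (1 - p) * c * (x0 * y0 + x0 * yN + xN * y0 + xN * yN)) =
   (al * (x0 + xN) ^+ 2 + ga * (y0 + yN) ^+ 2 - 2 * be * (x0 + xN) * (y0 + yN)) +
   al * (x0 - xN) ^+ 2 + ga * (y0 - yN) ^+ 2.
  by rewrite /al /ga /be; field.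
have := psd_binary_form (x0 + xN) (y0 + yN) al_ge0 ga_ge0 disc_le.
have := sqr_ge0 (x0 - xN); have := sqr_ge0 (y0 - yN); nra.
Qed.
End MixtureCoordBound.

Section DotProduct.
Variables (R : rcfType) (n : nat).
Implicit Types u v w : 'rV[R]_n.

Definition dot u v := \sum_(k < n) u 0 k * v 0 k.

Lemma dotC u v : dot u v = dot v u.
Proof. by apply: eq_bigr => k _; rewrite mulrC. Qed.

Lemma dotDl u v w : dot (u + v) w = dot u w + dot v w.
Proof. by rewrite /dot -big_split; apply: eq_bigr => k _; rewrite mxE mulrDl. Qed.

Lemma dotZl a u w : dot (a *: u) w = a * dot u w.
Proof. by rewrite /dot mulr_sumr; apply: eq_bigr => k _; rewrite mxE mulrA. Qed.

Lemma dotNl u w : dot (- u) w = - dot u w.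
Proof. by rewrite -scaleN1r dotZl mulN1r. Qed.

Lemma dotDr u v w : dot w (u + v) = dot w u + dot w v.
Proof. by rewrite dotC dotDl !(dotC w). Qed.

Lemma dotZr a u w : dot w (a *: u) = a * dot w u.
Proof. by rewrite dotC dotZl dotC. Qed.

Lemma dotNr u w : dot w (- u) = - dot w u.
Proof. by rewrite dotC dotNl dotC. Qed.

Definition dotE := (dotDl, dotZl, dotNl, dotDr, dotZr, dotNr).

Lemma dot_ge0 v : 0 <= dot v v.
Proof. by apply: sumr_ge0 => k _; rewrite -expr2 sqr_ge0. Qed.

Lemma dot_gt0 v : v != 0 -> 0 < dot v v.
Proof.
move=> v_neq0; rewrite lt_def dot_ge0 andbT; apply: contra v_neq0 => /eqP vv0.
have sq_ge0 (k : 'I_n) : true -> 0 <= v 0 k * v 0 k by rewrite -expr2 sqr_ge0.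
apply/eqP/rowP => k; rewrite mxE.
by have /eqP := psumr_eq0P sq_ge0 vv0 (i := k) isT; rewrite mulf_eq0 orbb => /eqP.
Qed.

Lemma dot0l w : dot 0 w = 0.
Proof. by rewrite /dot big1 // => k _; rewrite mxE mul0r. Qed.

Lemma dot_le_of_sqr_le mu u v : 0 < mu -> dot u u <= mu * dot u v ->
  dot u v <= mu * dot v v.
Proof.
move=> mu_gt0 uu_le; have := dot_ge0 (mu *: v - u); rewrite !dotE (dotC v u) => sq_ge0.
by rewrite -subr_ge0 -(pmulr_rge0 _ mu_gt0); lra.
Qed.
End DotProduct.

Section TwoPairMixture.
Variables (R : rcfType) (n : nat) (e0 eN u0 uN : 'rV[R]_n) (p c mu : R) (odd_case : bool).
Hypotheses (e0e0 : dot e0 e0 = 1) (eNeN : dot eN eN = 1) (e0eN : dot e0 eN = 0)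
  (u0u0 : dot u0 u0 = 1) (uNuN : dot uN uN = 1) (u0uN : dot u0 uN = 0)
  (e0u0 : dot e0 u0 = (-1) ^+ odd_case * c) (e0uN : dot e0 uN = c)
  (eNu0 : dot eN u0 = c) (eNuN : dot eN uN = c).

Let gramE := (e0e0, eNeN, e0eN, u0u0, uNuN, u0uN, e0u0, e0uN, eNu0, eNuN,
  dotC eN e0, dotC uN u0, dotC u0 e0, dotC uN e0, dotC u0 eN, dotC uN eN).

Definition mixture v := (p * dot v e0) *: e0 + (p * dot v eN) *: eN
   + ((1 - p) * dot v u0) *: u0 + ((1 - p) * dot v uN) *: uN.

Hypotheses (p_range : 0 <= p <= 1) (p_le_mu : p <= mu) (q_le_mu : 1 - p <= mu)
  (mu_root : mu ^+ 2 - mu + (1 - (if odd_case then 2 else 4) * c ^+ 2) * (p * (1 - p)) = 0).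

Lemma mixture_sqr_le v : dot (mixture v) (mixture v) <= mu * dot (mixture v) v.
Proof.
set x0 := dot v e0; set xN := dot v eN; set y0 := dot v u0; set yN := dot v uN.
have -> : dot (mixture v) v = p * (x0 ^+ 2 + xN ^+ 2) + (1 - p) * (y0 ^+ 2 + yN ^+ 2).
  by rewrite /mixture !dotE !(dotC _ v) -/x0 -/xN -/y0 -/yN; ring.
have -> : dot (mixture v) (mixture v) =
    p ^+ 2 * (x0 ^+ 2 + xN ^+ 2) + (1 - p) ^+ 2 * (y0 ^+ 2 + yN ^+ 2) + 2 * p * (1 - p) * c
    * ((-1) ^+ odd_case * x0 * y0 + x0 * yN + xN * y0 + xN * yN).
  by rewrite /mixture !dotE !gramE -/x0 -/xN -/y0 -/yN; ring.
case: odd_case mu_root => root.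
  by rewrite mulN1r; apply: mixture_coord_bound_odd.
by rewrite mul1r; apply: mixture_coord_bound_even.
Qed.

Let mu_gt0 : 0 < mu.
Proof. by move: p_le_mu q_le_mu => ? ?; lra. Qed.

Lemma mixture_dot_le v : dot (mixture v) v <= mu * dot v v.
Proof. exact: dot_le_of_sqr_le mu_gt0 (mixture_sqr_le v). Qed.

Hypothesis c_gt0 : 0 < c.

(* The top eigenvector lies in span(e0, uN - u0) in the odd case and in
   span(e0 + eN, u0 + uN) in the even case, with these coefficients. *)
Let x := 2 * c * p.
Let y := mu - p.

Let e0_coef : p * (x + 2 * c * y) = mu * x.
Proof. by rewrite /x /y; ring. Qed.

Let e0_coef_gt0 : 0 < x + 2 * c * y.
Proof.
have -> : x + 2 * c * y = 2 * c * mu by rewrite /x /y; ring.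
by rewrite !mulr_gt0.
Qed.

Lemma mixture_eigen_odd : odd_case ->
  exists2 v, mixture v = mu *: v & v != 0.
Proof.
move=> odd_true; move: mu_root; rewrite odd_true => root.
have signE : (-1) ^+ odd_case * c = - c by rewrite odd_true mulN1r.
pose v := x *: e0 + y *: (uN - u0).
have ve0 : dot v e0 = x + 2 * c * y by rewrite !dotE !gramE signE; ring.
have veN : dot v eN = 0 by rewrite !dotE !gramE; ring.
have vu0 : dot v u0 = - (c * x + y) by rewrite !dotE !gramE signE; ring.
have vuN : dot v uN = c * x + y by rewrite !dotE !gramE; ring.
have u_coef : (1 - p) * (c * x + y) = mu * y.
  apply/eqP; rewrite -subr_eq0 -oppr_eq0 -root; apply/eqP; rewrite /x /y; ring.
exists v.
  rewrite /mixture ve0 veN vu0 vuN e0_coef mulrN u_coef /v.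
  by apply/rowP => k; rewrite !mxE; ring.
by apply: contraTneq e0_coef_gt0 => v0; rewrite -ve0 v0 dot0l ltxx.
Qed.

Lemma mixture_eigen_even : ~~ odd_case ->
  exists2 v, mixture v = mu *: v & v != 0.
Proof.
move=> /negbTE odd_false; move: mu_root; rewrite odd_false => root.
have signE : (-1) ^+ odd_case * c = c by rewrite odd_false mul1r.
pose v := x *: (e0 + eN) + y *: (u0 + uN).
have ve0 : dot v e0 = x + 2 * c * y by rewrite !dotE !gramE signE; ring.
have veN : dot v eN = x + 2 * c * y by rewrite !dotE !gramE; ring.
have vu0 : dot v u0 = 2 * c * x + y by rewrite !dotE !gramE signE; ring.
have vuN : dot v uN = 2 * c * x + y by rewrite !dotE !gramE; ring.
have u_coef : (1 - p) * (2 * c * x + y) = mu * y.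
  apply/eqP; rewrite -subr_eq0 -oppr_eq0 -root; apply/eqP; rewrite /x /y; ring.
exists v.
  rewrite /mixture ve0 veN vu0 vuN e0_coef u_coef /v.
  by apply/rowP => k; rewrite !mxE; ring.
by apply: contraTneq e0_coef_gt0 => v0; rewrite -ve0 v0 dot0l ltxx.
Qed.
Lemma mixture_eigen : exists2 v, mixture v = mu *: v & v != 0.
Proof.
have [odd_true|odd_false] := boolP odd_case.
  exact: mixture_eigen_odd.
exact: mixture_eigen_even.
Qed.
End TwoPairMixture.

Lemma one_sub_lambda_min_root (R : rcfType) (pz c : R) N :
  0 <= pz <= 1 -> c ^+ 2 = (2 ^+ N)^-1 ->
  [/\ pz <= 1 - lambda_min pz N, 1 - pz <= 1 - lambda_min pz N &
      (1 - lambda_min pz N) ^+ 2 - (1 - lambda_min pz N)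
      + (1 - (if odd N then 2 else 4) * c ^+ 2) * (pz * (1 - pz)) = 0].
Proof.
move=> /andP[pz_ge0 pz_le1] c2; rewrite /lambda_min c2.
have -> : (if odd N then 8 else 16) = 4 * (if odd N then 2 else 4) :> R.
  by case: (odd N); ring.
set k : R := if odd N then 2 else 4; set w : R := (2 ^+ N)^-1.
have kw_ge0 : 0 <= k * w by rewrite mulr_ge0 ?invr_ge0 ?exprn_ge0 // /k; case: (odd N).
set D := (2 * pz - 1) ^+ 2 + _; have D_ge : (2 * pz - 1) ^+ 2 <= D.
  have pz_pz2 : 0 <= pz - pz ^+ 2 by nra.
  by rewrite lerDl -!mulrA mulr_ge0 // mulrA; apply: mulr_ge0.
have D_ge0 : 0 <= D by apply: le_trans D_ge; exact: sqr_ge0.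
set r := Num.sqrt D; have r_ge0 : 0 <= r := sqrtr_ge0 D.
have r2 : r ^+ 2 = D by rewrite sqr_sqrtr.
have r_ge : `|2 * pz - 1| <= r by rewrite -sqrtr_sqr ler_sqrt.
split.
- by move: r_ge => /ler_normlP[_ ?]; lra.
- by move: r_ge => /ler_normlP[? _]; lra.
have -> : (1 - (2^-1 - 2^-1 * r)) ^+ 2 - (1 - (2^-1 - 2^-1 * r)) + (1 - k * w) * (pz * (1 - pz))
    = (r ^+ 2 - D) / 4 by rewrite /D; field.
by rewrite r2 subrr mul0r.
Qed.

Lemma mulmx_ket_proj (R : rcfType) n (v : 'rV[R]_n) (w : 'cV[R]_n) :
  v *m ket_proj w = dot v w^T *: w^T.
Proof.
rewrite /ket_proj mulmxA; apply/rowP => k; rewrite !mxE big_ord1 !mxE.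
by congr (_ * _); apply: eq_bigr => i _; rewrite !mxE.
Qed.

Lemma sum_double_click (M : zmodType) N (G : 'I_N.+1 -> M) : (1 <= N)%N ->
  \sum_(n < N.+1 | (1 <= n)%N && (1 <= N - n)%N) G n = \sum_n G n - G ord0 - G ord_max.
Proof.
move=> N_gt0; have max_neq0 : ord_max != ord0 :> 'I_N.+1 by rewrite -val_eqE /= -lt0n.
rewrite [in RHS](bigD1 ord0) // [in RHS](bigD1 ord_max) //=.
rewrite (addrC (G ord0)) addrK (addrC (G ord_max)) addrK.
apply: eq_bigl => -[i lt_iN]; rewrite -!val_eqE /=.
by apply/idP/idP => [/andP[? ?]|/andP[/eqP ? /eqP ?]]; apply/andP; split; try apply/eqP; lia.
Qed.

Section FockBlock.
Variables (R : rcfType) (N : nat).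

Definition hv0 : 'rV[R]_N.+1 := (hv_ket R (ord0 : 'I_N.+1))^T.
Definition hvN : 'rV[R]_N.+1 := (hv_ket R (ord_max : 'I_N.+1))^T.
Definition da0 : 'rV[R]_N.+1 := (da_ket R (ord0 : 'I_N.+1))^T.
Definition daN : 'rV[R]_N.+1 := (da_ket R (ord_max : 'I_N.+1))^T.

Lemma hv_ket_complete : \sum_(n < N.+1) ket_proj (hv_ket R n) = 1%:M.
Proof.
apply/matrixP => i j; rewrite summxE !mxE.
under eq_bigr => n _ do rewrite !mxE big_ord1 !mxE.
rewrite (bigD1 i) //= big1 => [|k k_neq_i]; last by rewrite eq_sym (negbTE k_neq_i) mul0r.
by rewrite eqxx mul1r addr0 eq_sym; case: eqP.
Qed.

Lemma da_ket_complete : \sum_(n < N.+1) ket_proj (da_ket R n) = 1%:M.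
Proof.
apply/matrixP => i j; rewrite summxE !mxE.
under eq_bigr => n _ do rewrite !mxE big_ord1 !mxE.
by rewrite da_coef_orthonormal_rows // -ltnS.
Qed.

Lemma dot_hv_ket (i : 'I_N.+1) w : dot (hv_ket R i)^T w = w 0 i.
Proof.
rewrite /dot (bigD1 i) //= big1 => [|k k_neq_i]; first by rewrite !mxE eqxx mul1r addr0.
by rewrite !mxE (negbTE k_neq_i) mul0r.
Qed.

Lemma dot_da_ket (a b : 'I_N.+1) : dot (da_ket R a)^T (da_ket R b)^T = (a == b)%:R.
Proof.
rewrite /dot; under eq_bigr => k _ do rewrite !mxE.
by rewrite da_coef_orthonormal_cols // -ltnS.
Qed.

Hypothesis N_gt0 : (1 <= N)%N.

Lemma mulmx_PDC_N pz (v : 'rV[R]_N.+1) :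
  v *m PDC_N pz N = v - mixture hv0 hvN da0 daN pz v.
Proof.
rewrite /PDC_N /PHV_N /PDA_N !sum_double_click //.
rewrite hv_ket_complete da_ket_complete mulmxDr -!scalemxAr !mulmxBr mulmx1 !mulmx_ket_proj.
by apply/rowP => k; rewrite !mxE; ring.
Qed.

Let ord0_neq_max : ord0 != ord_max :> 'I_N.+1.
Proof. by rewrite -val_eqE /= eq_sym -lt0n. Qed.

Let hv0_unit : dot hv0 hv0 = 1. Proof. by rewrite /hv0 dot_hv_ket !mxE eqxx. Qed.
Let hvN_unit : dot hvN hvN = 1. Proof. by rewrite /hvN dot_hv_ket !mxE eqxx. Qed.
Let hv0_hvN : dot hv0 hvN = 0.
Proof. by rewrite /hv0 dot_hv_ket !mxE (negbTE ord0_neq_max). Qed.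
Let da0_unit : dot da0 da0 = 1. Proof. by rewrite /da0 dot_da_ket eqxx. Qed.
Let daN_unit : dot daN daN = 1. Proof. by rewrite /daN dot_da_ket eqxx. Qed.
Let da0_daN : dot da0 daN = 0.
Proof. by rewrite /da0 /daN dot_da_ket (negbTE ord0_neq_max). Qed.
Let hv0_da0 : dot hv0 da0 = (-1) ^+ odd N * overlap R N.
Proof. by rewrite /hv0 dot_hv_ket !mxE da_coef00 signr_odd. Qed.
Let hv0_daN : dot hv0 daN = overlap R N. Proof. by rewrite /hv0 dot_hv_ket !mxE da_coefN0. Qed.
Let hvN_da0 : dot hvN da0 = overlap R N. Proof. by rewrite /hvN dot_hv_ket !mxE da_coef0N. Qed.
Let hvN_daN : dot hvN daN = overlap R N. Proof. by rewrite /hvN dot_hv_ket !mxE da_coefNN. Qed.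

Lemma PDC_N_eigenvalue (pz : R) : 0 <= pz <= 1 -> eigenvalue (PDC_N pz N) (lambda_min pz N).
Proof.
move=> pz_range.
have [p_le_mu q_le_mu root] := one_sub_lambda_min_root pz_range (sqr_overlap R N).
have [v mix_v v_neq0] := mixture_eigen hv0_unit hvN_unit hv0_hvN da0_unit daN_unit da0_daN
  hv0_da0 hv0_daN hvN_da0 hvN_daN p_le_mu q_le_mu root (overlap_gt0 R N).
apply/eigenvalueP; exists v => //.
by rewrite mulmx_PDC_N mix_v scalerBl scale1r opprB addrC subrK.
Qed.

Lemma PDC_N_eigenvalue_ge (pz a : R) : 0 <= pz <= 1 ->
  eigenvalue (PDC_N pz N) a -> lambda_min pz N <= a.
Proof.
move=> pz_range /eigenvalueP[v v_a v_neq0].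
have [p_le_mu q_le_mu root] := one_sub_lambda_min_root pz_range (sqr_overlap R N).
have := mixture_dot_le hv0_unit hvN_unit hv0_hvN da0_unit daN_unit da0_daN
  hv0_da0 hv0_daN hvN_da0 hvN_daN pz_range p_le_mu q_le_mu root v.
have -> : mixture hv0 hvN da0 daN pz v = (1 - a) *: v.
  by rewrite scalerBl scale1r -v_a mulmx_PDC_N opprB addrC subrK.
rewrite dotZl => le_mu; have vv_gt0 := dot_gt0 v_neq0.
by rewrite -subr_ge0 -(pmulr_rge0 _ vv_gt0); lra.
Qed.
End FockBlock.

Theorem lemma2 (R : rcfType) (pz : R) (N : nat) :
  0 <= pz <= 1 -> (1 <= N)%N ->
  eigenvalue (PDC_N pz N) (lambda_min pz N) /\
  (forall a : R, eigenvalue (PDC_N pz N) a -> lambda_min pz N <= a).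
Proof.
move=> pz_range N_gt0; split=> [|a]; first exact: PDC_N_eigenvalue.
exact: PDC_N_eigenvalue_ge.
Qed.
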